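(* Let $N\cong\mathbb{Z}^3$ and let $P$ be a minimal Fano polytope in $N_\mathbb{R}$ which contains two triangles $T_1,T_2$, whose vertices are vertices of $P$, lying in distinct two-dimensional linear subspaces $L_1\ne L_2$, such that each $T_j$ is equivalent (under an isomorphism of lattices $\mathbb{Z}^2\to N\cap L_j$) to $\mathrm{conv}\{(1,0),(0,1),(-2,-1)\}$ (the Fano triangle of $\mathbb{P}(1,1,2)$). Then, up to the action of $GL(3,\mathbb{Z})$, $P$ is the convex hull of the columns of one of $$\begin{pmatrix}1&0&0&-2&-2\\0&1&0&-1&0\\0&0&1&0&-1\end{pmatrix}\quad\text{or}\quad\begin{pmatrix}1&0&-2&1&-3\\0&1&-1&1&-1\\0&0&0&2&-2\end{pmatrix}.$$
   Context: A Fano polytope is a three-dimensional convex polytope $P\subset N_\mathbb{R}$ with vertices in $N$ such that the origin is the only lattice point in the interior of $P$. It is minimal if, for every vertex $\rho$ of $P$, the polytope $\mathrm{conv}((P\cap N)\setminus\{\rho\})$ is not a Fano polytope. Polytopes are identified up to $GL(3,\mathbb{Z})$ (after choosing a basis of $N$). *)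

(* Lattice N = Z^3 as row vectors 'rV[int]_3; N_Q = 'rV[rat]_3. *)
From mathcomp Require Import all_boot all_order all_algebra.
Set Implicit Arguments. Unset Strict Implicit. Unset Printing Implicit Defensive.
Import Order.TTheory GRing.Theory Num.Theory.
Local Open Scope ring_scope.

Definition lpt := 'rV[int]_3.
Definition qpt := 'rV[rat]_3.

Definition mkpt (a b c : int) : lpt := \row_(i < 3) nth 0 [:: a; b; c] i.

Definition toQ (v : lpt) : qpt := map_mx (intr : int -> rat) v.

Definition conv (A : lpt -> Prop) (x : qpt) : Prop :=
  exists s : seq lpt, (forall v, v \in s -> A v) /\
  exists c : 'I_(size s) -> rat, (forall i, 0 <= c i) /\
    \sum_(i < size s) c i = 1 /\
    x = \sum_(i < size s) c i *: toQ (nth 0 s i).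

Definition interior (A : lpt -> Prop) (x : qpt) : Prop :=
  exists eps : rat, 0 < eps /\
    forall y : qpt, (forall i, `|y ord0 i - x ord0 i| < eps) -> conv A y.

(* conv A is a Fano polytope: the origin is the only lattice point in its
   interior (and it is one, which forces conv A to be three-dimensional). *)
Definition fano (A : lpt -> Prop) : Prop :=
  interior A 0 /\ forall z : lpt, interior A (toQ z) -> z = 0.

Definition polytope (S : seq lpt) : lpt -> Prop := fun v => v \in S.

Definition vertex (S : seq lpt) (v : lpt) : Prop :=
  v \in S /\ ~ conv (fun w => w \in S /\ w != v) (toQ v).

Definition minimal_fano (S : seq lpt) : Prop :=
  fano (polytope S) /\
  forall rho, vertex S rho ->
    ~ fano (fun z => conv (polytope S) (toQ z) /\ z != rho).

Definition in_span2 (e1 e2 : lpt) (x : qpt) : Prop :=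
  exists p q : rat, x = p *: toQ e1 + q *: toQ e2.

Definition lattice_basis2 (e1 e2 : lpt) : Prop :=
  (forall p q : rat, p *: toQ e1 + q *: toQ e2 = 0 -> p = 0 /\ q = 0) /\
  (forall z : lpt, in_span2 e1 e2 (toQ z) ->
     exists m n : int, z = m *: e1 + n *: e2).

(* P contains a triangle with vertices among the vertices of P, lying in the
   plane span(e1,e2), equal to the image of conv{(1,0),(0,1),(-2,-1)} under the
   lattice isomorphism Z^2 -> N ∩ L sending the standard basis to e1, e2. *)
Definition P112_triangle (S : seq lpt) (e1 e2 : lpt) : Prop :=
  lattice_basis2 e1 e2 /\
  vertex S e1 /\ vertex S e2 /\ vertex S (- (2%:Z *: e1) - e2).

(* GL(3,Z) acting on row vectors *)
Definition GL3Z (A : 'M[int]_3) : Prop := \det A = 1 \/ \det A = -1.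

Definition M1 : seq lpt :=
  [:: mkpt 1 0 0; mkpt 0 1 0; mkpt 0 0 1; mkpt (-2) (-1) 0; mkpt (-2) 0 (-1)].
Definition M2 : seq lpt :=
  [:: mkpt 1 0 0; mkpt 0 1 0; mkpt (-2) (-1) 0; mkpt 1 1 2; mkpt (-3) (-1) (-2)].

Definition equiv_to (S : seq lpt) (A : 'M[int]_3) (M : seq lpt) : Prop :=
  forall x : qpt, conv (polytope S) x <->
                  conv (polytope (map (fun v : lpt => v *m A) M)) x.

(** Let T = {t1, t2, t3} with
    t3 = -2 t1 - t2 be a P(1,1,2)-triangle in P, so that the origin is the interior
    point 2/4 t1 + 1/4 t2 + 1/4 t3 of T, and let rho be a vertex of P outside T.  If P
    contains lattice points other than rho strictly on both sides of the plane of T,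
    then 0 stays interior after removing rho, contradicting minimality.

    For the triangle spanned by f1, f2 the heights a, b, c of e1, e2, e3 over its plane
    satisfy 2a + b + c = 0 and are not all zero, so two of them have opposite signs:
    the two triangles share a vertex.  If that vertex is not the apex of both, some
    vertex of P lies at height -2h over one of the planes while P contains lattice
    points at heights h and -h, so the shared vertex is e1 = f1.  Then every vertex of
    P is among e1, e2, e3, f := f2, -2 e1 - f.  Write f = k x - a e1 - b e2 with
    det(e1, e2, x) = +-1 and 0 <= a, b < k.  Unless k = 1, or a = b and 2a = k, the
    tetrahedron conv{f, e1, e2, e3} contains a lattice point at height +-1, which is
    again excluded by minimality; a = b >= 2 would make f non-primitive.  The cases
    k = 1 and k = 2, a = b = 1 give the two matrices. *)

From mathcomp Require Import all_boot all_order all_algebra.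
From mathcomp Require Import zify ring lra.
From Stdlib Require List.
From Stdlib Require Import Classical.
Set Implicit Arguments. Unset Strict Implicit. Unset Printing Implicit Defensive.
Import Order.TTheory GRing.Theory Num.Theory.
Local Open Scope ring_scope.

(** * Coordinates and determinants *)

Notation i0 := (@inord 2 0).
Notation i1 := (@inord 2 1).
Notation i2 := (@inord 2 2).

Lemma ord3P (P : 'I_3 -> Prop) : P i0 -> P i1 -> P i2 -> forall i, P i.
Proof.
move=> h0 h1 h2 [[|[|[|//]]] lti].
- by rewrite (_ : Ordinal lti = i0) //; apply: val_inj; rewrite /= inordK.
- by rewrite (_ : Ordinal lti = i1) //; apply: val_inj; rewrite /= inordK.
- by rewrite (_ : Ordinal lti = i2) //; apply: val_inj; rewrite /= inordK.
Qed.

Lemma row3P (T : Type) (x y : 'rV[T]_3) :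
  x ord0 i0 = y ord0 i0 -> x ord0 i1 = y ord0 i1 -> x ord0 i2 = y ord0 i2 -> x = y.
Proof. by move=> h0 h1 h2; apply/rowP; apply: ord3P. Qed.

Lemma mkpt0 a b c : mkpt a b c ord0 i0 = a. Proof. by rewrite mxE inordK. Qed.

Lemma mkpt1 a b c : mkpt a b c ord0 i1 = b. Proof. by rewrite mxE inordK. Qed.

Lemma mkpt2 a b c : mkpt a b c ord0 i2 = c. Proof. by rewrite mxE inordK. Qed.

Definition mkptE := (mkpt0, mkpt1, mkpt2).

Lemma mkpt_eta (v : lpt) : mkpt (v ord0 i0) (v ord0 i1) (v ord0 i2) = v.
Proof. by apply: row3P; rewrite !mkptE. Qed.

Lemma toQE (v : lpt) i : toQ v ord0 i = (v ord0 i)%:~R. Proof. by rewrite mxE. Qed.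

Lemma toQD a b : toQ (a + b) = toQ a + toQ b. Proof. exact: map_mxD. Qed.

Lemma toQZ (c : int) a : toQ (c *: a) = c%:~R *: toQ a. Proof. exact: map_mxZ. Qed.

Lemma toQ0 : toQ 0 = 0. Proof. exact: map_mx0. Qed.

Lemma toQ_inj : injective toQ.
Proof. by move=> a b /rowP eq_ab; apply/rowP=> i; move: (eq_ab i); rewrite !mxE => /intr_inj. Qed.

Section Det3.
Variable R : comPzRingType.
Implicit Types a b c z : 'rV[R]_3.

Definition det3 a b c : R :=
  a ord0 i0 * (b ord0 i1 * c ord0 i2 - b ord0 i2 * c ord0 i1)
 - a ord0 i1 * (b ord0 i0 * c ord0 i2 - b ord0 i2 * c ord0 i0)
 + a ord0 i2 * (b ord0 i0 * c ord0 i1 - b ord0 i1 * c ord0 i0).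

Lemma cramer3 a b c z :
  det3 a b c *: z = det3 z b c *: a + det3 a z c *: b + det3 a b z *: c.
Proof. apply: row3P; rewrite !mxE /det3; ring. Qed.

End Det3.

Lemma cramer3_coords (F : fieldType) (p1 p2 p3 d : 'rV[F]_3) : det3 p1 p2 p3 != 0 ->
  d = (det3 d p2 p3 / det3 p1 p2 p3) *: p1 + (det3 p1 d p3 / det3 p1 p2 p3) *: p2
      + (det3 p1 p2 d / det3 p1 p2 p3) *: p3.
Proof.
move=> det_neq0; apply: (scalerI det_neq0); rewrite cramer3 !scalerDr !scalerA.
by rewrite !(mulrC (det3 p1 p2 p3)) !divfK.
Qed.

Lemma det3_toQ a b c : det3 (toQ a) (toQ b) (toQ c) = (det3 a b c)%:~R.
Proof. rewrite /det3 !toQE; ring. Qed.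

Definition third_vertex (e1 e2 : lpt) : lpt := - (2%:Z *: e1) - e2.

Lemma third_vertexK t : involutive (third_vertex t).
Proof. by move=> u; apply: row3P; rewrite !mxE; ring. Qed.

Lemma det3_third t1 t2 a b :
  det3 t1 t2 (third_vertex a b) = -2 * det3 t1 t2 a - det3 t1 t2 b.
Proof. rewrite /det3 !mxE; ring. Qed.

Lemma det3_aba (a b : lpt) : det3 a b a = 0. Proof. rewrite /det3; ring. Qed.

Lemma det3_abb (a b : lpt) : det3 a b b = 0. Proof. rewrite /det3; ring. Qed.

Lemma det3_a_third (a b c : lpt) : det3 a (third_vertex a b) c = - det3 a b c.
Proof. by rewrite /det3 !mxE; ring. Qed.

Definition mat3 (r1 r2 r3 : lpt) : 'M[int]_3 := \matrix_(i, j) (nth 0 [:: r1; r2; r3] i) ord0 j.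

Lemma det_mat3 r1 r2 r3 : \det (mat3 r1 r2 r3) = det3 r1 r2 r3.
Proof.
rewrite -[r1]mkpt_eta -[r2]mkpt_eta -[r3]mkpt_eta.
do ![rewrite (expand_det_row _ ord0) !big_ord_recr big_ord0 /= add0r /cofactor].
by rewrite !det_mx00 !mxE /= /det3 !mkptE; ring.
Qed.

Lemma mkpt_mul_mat3 (a b c : int) r1 r2 r3 :
  mkpt a b c *m mat3 r1 r2 r3 = a *: r1 + b *: r2 + c *: r3.
Proof. by apply/rowP => j; rewrite !mxE !big_ord_recr big_ord0 /= add0r !mxE. Qed.

(** * Convex hulls *)

Lemma ForallP (T : eqType) (P : T -> Prop) (l : seq T) :
  List.Forall P l <-> (forall x, x \in l -> P x).
Proof.
elim: l => [|y l IH]; first by split=> // _ x.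
rewrite List.Forall_cons_iff IH; split=> [[Py Pl] x|Pyl].
  by rewrite inE => /predU1P[->|/Pl].
by split=> [|x lx]; apply: Pyl; rewrite inE ?eqxx ?lx ?orbT.
Qed.

(* A list-based variant of [conv] on rational points; it makes combinations of
   combinations easy to flatten. *)
Definition hull (B : qpt -> Prop) (x : qpt) : Prop :=
  exists l : seq (rat * qpt), List.Forall (fun p => 0 <= p.1 /\ B p.2) l /\
    \sum_(p <- l) p.1 = 1 /\ x = \sum_(p <- l) p.1 *: p.2.

Definition lattice_image (A : lpt -> Prop) (q : qpt) : Prop := exists2 v, A v & q = toQ v.

Lemma conv_hull A x : conv A x <-> hull (lattice_image A) x.
Proof.
split=> [[s [sA [c [c_ge0 [c1 ->]]]]]|[l [lA [l1 ->]]]].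
  exists [seq (c i, toQ (nth 0 s i)) | i <- index_enum 'I_(size s)].
  rewrite !big_map; split=> //.
  apply/List.Forall_map/List.Forall_forall=> i _; split; first exact: c_ge0.
  by exists (nth 0 s i); first apply/sA/mem_nth.
have [l' [l'A [e1 ->]]] : exists l' : seq (rat * lpt),
    List.Forall (fun p => 0 <= p.1 /\ A p.2) l' /\
    \sum_(p <- l') p.1 = \sum_(p <- l) p.1 /\
    \sum_(p <- l) p.1 *: p.2 = \sum_(p <- l') p.1 *: toQ p.2.
  elim: l lA {l1} => [|[w q] l IH]; first by exists [::]; rewrite !big_nil.
  move=> /List.Forall_cons_iff[[/= w_ge0 [v Av ->]] /IH[l' [l'A [e1 e2]]]].
  by exists ((w, v) :: l'); rewrite !big_cons e1 e2; split; first by constructor.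
rewrite -e1 in l1; move/ForallP: l'A => l'A; exists [seq p.2 | p <- l']; split.
  by move=> v /mapP[p /l'A[_ Ap] ->].
rewrite size_map; exists (fun i => (nth (0, 0) l' i).1); split.
  by move=> i; case: (l'A _ (mem_nth (0, 0) (ltn_ord i))).
rewrite -l1 !(big_nth (0, 0)) !big_mkord; split=> //.
by apply: eq_bigr => i _; rewrite (nth_map (0, 0)).
Qed.

Lemma hull_mono (B C : qpt -> Prop) x : (forall q, B q -> C q) -> hull B x -> hull C x.
Proof.
move=> BC [l [lB e]]; exists l; split=> //.
by apply: List.Forall_impl lB => p [? /BC].
Qed.

Lemma hull_hull B x : hull (hull B) x -> hull B x.
Proof.
move=> [l [lB [l1 ->]]].
suff [l' [l'B [e1 ->]]] : exists l' : seq (rat * qpt),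
    List.Forall (fun p => 0 <= p.1 /\ B p.2) l' /\
    \sum_(p <- l') p.1 = \sum_(p <- l) p.1 /\
    \sum_(p <- l) p.1 *: p.2 = \sum_(p <- l') p.1 *: p.2.
  by exists l'; rewrite e1.
elim: l lB {l1} => [|[w q] l IH]; first by exists [::]; rewrite !big_nil.
move=> /List.Forall_cons_iff[[/= w_ge0 [lq [lqB [lq1 ->]]]] /IH[l' [l'B [e1 e2]]]].
exists ([seq (w * p.1, p.2) | p <- lq] ++ l'); split; last split.
- apply/List.Forall_app; split=> //; apply/List.Forall_map.
  by apply: List.Forall_impl lqB => p [p_ge0 Bp]; split=> //; apply: mulr_ge0.
- by rewrite big_cat big_map big_cons e1 -mulr_sumr lq1 mulr1.
- rewrite big_cat big_map big_cons e2 scaler_sumr; congr (_ + _).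
  by apply: eq_bigr => p _; rewrite scalerA.
Qed.

Lemma conv_comb A (l : seq (rat * qpt)) :
  List.Forall (fun p => 0 <= p.1 /\ conv A p.2) l -> \sum_(p <- l) p.1 = 1 ->
  conv A (\sum_(p <- l) p.1 *: p.2).
Proof.
move=> lA l1; apply/conv_hull/hull_hull; exists l; split=> //.
by apply: List.Forall_impl lA => p [? /conv_hull].
Qed.

Lemma hull_pt B q : B q -> hull B q.
Proof.
move=> Bq; exists [:: (1, q)]; rewrite !big_seq1 scale1r.
by split=> //; apply: List.Forall_cons.
Qed.

Lemma conv_pt (A : lpt -> Prop) v : A v -> conv A (toQ v).
Proof. by move=> Av; apply/conv_hull/hull_pt; exists v. Qed.

Lemma conv_trans (A B : lpt -> Prop) x :
  (forall v, A v -> conv B (toQ v)) -> conv A x -> conv B x.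
Proof.
move=> AB /conv_hull Ax; apply/conv_hull/hull_hull.
by apply: hull_mono Ax => q [v /AB /conv_hull Bv ->].
Qed.

Lemma conv_mono (A B : lpt -> Prop) x : (forall v, A v -> B v) -> conv A x -> conv B x.
Proof. by move=> AB; apply: conv_trans => v /AB /conv_pt. Qed.

Lemma conv2 A (p q : qpt) (a : rat) : conv A p -> conv A q -> 0 <= a <= 1 ->
  conv A (a *: p + (1 - a) *: q).
Proof.
move=> Ap Aq /andP[a_ge0 a_le1].
have := @conv_comb A [:: (a, p); (1 - a, q)].
rewrite !big_cons !big_nil /= !addr0; apply; last by rewrite addrC subrK.
by do !apply: List.Forall_cons; rewrite ?subr_ge0.
Qed.

Lemma conv3 A (p q r : qpt) (a b c : rat) : conv A p -> conv A q -> conv A r ->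
  0 <= a -> 0 <= b -> 0 <= c -> a + b + c = 1 -> conv A (a *: p + b *: q + c *: r).
Proof.
move=> Ap Aq Ar a_ge0 b_ge0 c_ge0 abc1.
have := @conv_comb A [:: (a, p); (b, q); (c, r)].
rewrite !big_cons !big_nil /= !addr0 !addrA; apply=> //.
by do !apply: List.Forall_cons.
Qed.

Lemma conv4 A (p q r s : qpt) (a b c d : rat) :
  conv A p -> conv A q -> conv A r -> conv A s ->
  0 <= a -> 0 <= b -> 0 <= c -> 0 <= d -> a + b + c + d = 1 ->
  conv A (a *: p + b *: q + c *: r + d *: s).
Proof.
move=> Ap Aq Ar As a_ge0 b_ge0 c_ge0 d_ge0 abcd1.
have := @conv_comb A [:: (a, p); (b, q); (c, r); (d, s)].
rewrite !big_cons !big_nil /= !addr0 !addrA; apply=> //.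
by do !apply: List.Forall_cons.
Qed.

(** * The origin as an interior point *)

Lemma conv_scale_down A (d : qpt) (t m : rat) :
  conv A 0 -> conv A (t *: d) -> 0 < t -> 0 <= m <= t -> conv A (m *: d).
Proof.
move=> A0 Atd t_gt0 /andP[m_ge0 m_le_t].
have -> : m *: d = (m / t) *: (t *: d) + (1 - m / t) *: 0.
  by rewrite scaler0 addr0 scalerA mulfVK // gt_eqF.
by apply: conv2; rewrite // divr_ge0 ?ler_pdivrMr ?mul1r // ltW.
Qed.

Lemma absorbing_uniform A (ds : seq qpt) :
  conv A 0 -> (forall d, exists2 t, 0 < t & conv A (t *: d)) ->
  exists2 m, 0 < m & forall d, d \in ds -> conv A (m *: d).
Proof.
move=> A0 absA; elim: ds => [|d ds [m m_gt0 Adsm]]; first by exists 1.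
have [t t_gt0 Atd] := absA d; set u := Num.min t m.
have u_ge0 : 0 <= u by rewrite le_min !ltW.
have [u_le_t u_le_m] : u <= t /\ u <= m by rewrite !ge_min !lexx orbT.
exists u => [|d']; first by rewrite lt_min t_gt0.
rewrite inE => /predU1P[->|/Adsm Adm].
  by apply: (conv_scale_down A0 Atd t_gt0); rewrite u_ge0.
by apply: (conv_scale_down A0 Adm m_gt0); rewrite u_ge0.
Qed.

Definition coord_dirs : seq qpt := [seq s *: toQ v | s <- [:: 1; -1],
  v <- [:: mkpt 1 0 0; mkpt 0 1 0; mkpt 0 0 1]].

Lemma interior0_absorbing A :
  conv A 0 -> (forall d, exists2 t, 0 < t & conv A (t *: d)) -> interior A 0.
Proof.
move=> A0 /(absorbing_uniform coord_dirs A0)[m m_gt0 Adirs].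
exists (m / 3); split=> [|y y_small]; first exact: divr_gt0.
have [[y0 y1] y2] := (y_small i0, y_small i1, y_small i2).
rewrite !mxE !subr0 in y0 y1 y2.
set a := y ord0 i0 in y0 *; set b := y ord0 i1 in y1 *; set c := y ord0 i2 in y2 *.
(* y is a convex combination of 0 and the points +-m e_i, the positive and negative
   parts of its coordinates serving as weights. *)
pose pos (x : rat) := (`|x| + x) / 2 / m; pose neg (x : rat) := (`|x| - x) / 2 / m.
have pos_ge0 x : 0 <= pos x.
  by rewrite !divr_ge0 ?(ltW m_gt0) // -lerBlDr sub0r ler_normr lexx orbT.
have neg_ge0 x : 0 <= neg x by rewrite !divr_ge0 ?(ltW m_gt0) // subr_ge0 ler_norm.
have m_neq0 : m != 0 by rewrite gt_eqF.
pose rest := 1 - (pos a + neg a + pos b + neg b + pos c + neg c).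
have -> : y = \sum_(p <- [:: (pos a, (m * 1) *: toQ (mkpt 1 0 0));
      (neg a, (m * -1) *: toQ (mkpt 1 0 0)); (pos b, (m * 1) *: toQ (mkpt 0 1 0));
      (neg b, (m * -1) *: toQ (mkpt 0 1 0)); (pos c, (m * 1) *: toQ (mkpt 0 0 1));
      (neg c, (m * -1) *: toQ (mkpt 0 0 1)); (rest, 0)]) p.1 *: p.2.
  rewrite !big_cons big_nil; apply: row3P; rewrite !mxE !inordK //= -/a -/b -/c;
    by rewrite /rest /pos /neg; field.
have rest_ge0 : 0 <= rest.
  have -> : rest = 1 - (`|a| + `|b| + `|c|) / m by rewrite /rest /pos /neg; field.
  by rewrite subr_ge0 ler_pdivrMr // mul1r; move: y0 y1 y2; rewrite ltr_pdivlMr //; lra.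
apply: conv_comb; last by rewrite !big_cons big_nil /rest /=; ring.
have dir s u v w : s *: toQ (mkpt u v w) \in coord_dirs -> conv A ((m * s) *: toQ (mkpt u v w)).
  by rewrite -scalerA => /Adirs.
by do !apply: List.Forall_cons; do ?split; rewrite ?pos_ge0 ?neg_ge0 //;
  apply: dir; rewrite /coord_dirs /= !inE eqxx ?orbT.
Qed.

Lemma conv_pos_comb A (l : seq (rat * qpt)) :
  List.Forall (fun p => 0 <= p.1 /\ conv A p.2) l -> 0 < \sum_(p <- l) p.1 ->
  exists2 t, 0 < t & conv A (t *: \sum_(p <- l) p.1 *: p.2).
Proof.
set s := \sum_(p <- l) p.1 => lA s_gt0; exists s^-1; first by rewrite invr_gt0.
have -> : s^-1 *: \sum_(p <- l) p.1 *: p.2 = \sum_(p <- l) (p.1 / s) *: p.2.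
  by rewrite scaler_sumr; apply: eq_bigr => p _; rewrite scalerA mulrC.
have := @conv_comb A [seq (p.1 / s, p.2) | p <- l].
rewrite !big_map -mulr_suml mulfV ?gt_eqF //; apply=> //.
apply/List.Forall_map; apply: List.Forall_impl lA => p [w_ge0 Ap].
by split=> //; rewrite divr_ge0 // ltW.
Qed.

Lemma relation_absorbing A (p1 p2 p3 : qpt) (l1 l2 l3 : rat) (l : seq (rat * qpt)) :
  conv A p1 -> conv A p2 -> conv A p3 ->
  List.Forall (fun p => 0 <= p.1 /\ conv A p.2) l ->
  0 < l1 -> 0 < l2 -> 0 < l3 ->
  l1 *: p1 + l2 *: p2 + l3 *: p3 + \sum_(p <- l) p.1 *: p.2 = 0 ->
  det3 p1 p2 p3 != 0 -> forall d, exists2 t, 0 < t & conv A (t *: d).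
Proof.
move=> A1 A2 A3 lA l1_gt0 l2_gt0 l3_gt0 rel det_neq0 d.
have lw_ge0 : 0 <= \sum_(p <- l) p.1.
  by rewrite big_seq sumr_ge0 // => p /((ForallP _ _).1 lA)[].
(* Adding T times the relation to the coordinates of d makes all weights nonnegative. *)
set D := det3 p1 p2 p3.
pose a1 := det3 d p2 p3 / D; pose a2 := det3 p1 d p3 / D; pose a3 := det3 p1 p2 d / D.
have dE : d = a1 *: p1 + a2 *: p2 + a3 *: p3 := cramer3_coords d det_neq0.
pose T := 1 + `|a1| / l1 + `|a2| / l2 + `|a3| / l3.
have weight_ge (k a : rat) : 0 < k -> 1 + `|a| / k <= T -> k <= a + T * k.
  move=> k_gt0 le_T; have : `|a| <= (T - 1) * k by rewrite -ler_pdivrMr //; lra.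
  by have := ler_norm (- a); rewrite normrN; nra.
have [q1 q2 q3] : [/\ 0 <= `|a1| / l1, 0 <= `|a2| / l2 & 0 <= `|a3| / l3].
  by split; rewrite divr_ge0 // ltW.
have w1 : l1 <= a1 + T * l1 by apply: weight_ge => //; rewrite /T; lra.
have w2 : l2 <= a2 + T * l2 by apply: weight_ge => //; rewrite /T; lra.
have w3 : l3 <= a3 + T * l3 by apply: weight_ge => //; rewrite /T; lra.
have T_ge0 : 0 <= T by rewrite /T; lra.
set L := [:: (a1 + T * l1, p1), (a2 + T * l2, p2), (a3 + T * l3, p3)
              & [seq (T * p.1, p.2) | p <- l]].
have L_ge0 : List.Forall (fun p => 0 <= p.1 /\ conv A p.2) L.
  do 3!(apply: List.Forall_cons; first by split=> //=; lra).
  apply/List.Forall_map; apply: List.Forall_impl lA => p [w_ge0 Ap].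
  by split=> //; apply: mulr_ge0.
have [|t t_gt0] := conv_pos_comb L_ge0.
  rewrite !big_cons big_map -mulr_sumr /=.
  by have := mulr_ge0 T_ge0 lw_ge0; lra.
suff -> : \sum_(p <- L) p.1 *: p.2 = d by exists t.
have relE : \sum_(p <- l) p.1 *: p.2 = - (l1 *: p1 + l2 *: p2 + l3 *: p3).
  by apply/eqP; rewrite -addr_eq0 addrC rel.
rewrite !big_cons big_map /=.
under eq_bigr do rewrite -scalerA.
rewrite -scaler_sumr relE dE.
by apply: row3P; rewrite !mxE; ring.
Qed.

Lemma interior0_of_relation A (p1 p2 p3 : qpt) (l1 l2 l3 : rat) (l : seq (rat * qpt)) :
  conv A p1 -> conv A p2 -> conv A p3 ->
  List.Forall (fun p => 0 <= p.1 /\ conv A p.2) l ->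
  0 < l1 -> 0 < l2 -> 0 < l3 ->
  l1 *: p1 + l2 *: p2 + l3 *: p3 + \sum_(p <- l) p.1 *: p.2 = 0 ->
  det3 p1 p2 p3 != 0 -> interior A 0.
Proof.
move=> A1 A2 A3 lA l1_gt0 l2_gt0 l3_gt0 rel det_neq0.
have absA := relation_absorbing A1 A2 A3 lA l1_gt0 l2_gt0 l3_gt0 rel det_neq0.
have [t _] := absA 0; rewrite scaler0 => A0.
exact: interior0_absorbing A0 absA.
Qed.

(** * Minimal Fano polytopes *)

Definition in_hull (S : seq lpt) (v : lpt) : Prop := conv (polytope S) (toQ v).

Definition in_hull_except (S : seq lpt) (rho : lpt) (z : lpt) : Prop := in_hull S z /\ z != rho.

Lemma vertex_in_hull S v : vertex S v -> in_hull S v.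
Proof. by case=> vS _; apply: conv_pt. Qed.

Lemma interior_trans (A B : lpt -> Prop) x :
  (forall v, A v -> conv B (toQ v)) -> interior A x -> interior B x.
Proof. by move=> AB [e [e_gt0 Ae]]; exists e; split=> // y /Ae; apply: conv_trans. Qed.

Lemma minimal_fano_vertex_essential S rho :
  minimal_fano S -> vertex S rho -> ~ interior (in_hull_except S rho) 0.
Proof.
move=> [[_ fanoS] minS] rhoS int0; apply: (minS rho rhoS); split=> // z intz.
by apply: fanoS; apply: interior_trans intz => v [].
Qed.

Lemma minimal_fano_one_sided_pos S rho (t1 t2 x y : lpt) :
  minimal_fano S -> vertex S rho ->
  in_hull_except S rho t1 -> in_hull_except S rho t2 ->
  in_hull_except S rho (third_vertex t1 t2) ->
  in_hull_except S rho x -> in_hull_except S rho y ->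
  0 < det3 t1 t2 x -> det3 t1 t2 y < 0 -> False.
Proof.
move=> minS rhoS At1 At2 At3 Ax Ay Dx_gt0 Dy_lt0.
apply: (minimal_fano_vertex_essential minS rhoS).
set Dx := det3 t1 t2 x; set Dy := det3 t1 t2 y.
set k1 := det3 y t2 x; set k2 := det3 t1 y x; set T := `|k1| + `|k2| + 1.
(* -Dy x + Dx y lies in the plane of t1, t2; adding T (2 t1 + t2 + t3) = 0 makes
   every coefficient positive. *)
have rel : (2 * T - k1) *: t1 + (T - k2) *: t2 + (- Dy) *: x
           + (Dx *: y + T *: third_vertex t1 t2) = 0.
  have := cramer3 t1 t2 x y; rewrite -/Dx -/k1 -/k2 -/Dy => cr.
  rewrite addrA cr; apply: row3P; rewrite !mxE; ring.
have [k1_le k2_le] : k1 <= `|k1| /\ k2 <= `|k2| by rewrite !ler_norm.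
have T_gt0 : 0 < T by rewrite /T; have := normr_ge0 k1; have := normr_ge0 k2; lia.
have pts (v : lpt) : in_hull_except S rho v -> conv (in_hull_except S rho) (toQ v).
  exact: conv_pt.
apply: (interior0_of_relation (l1 := (2 * T - k1)%:~R) (l2 := (T - k2)%:~R) (l3 := (- Dy)%:~R)
  (l := [:: (Dx%:~R, toQ y); (T%:~R, toQ (third_vertex t1 t2))])
  (pts _ At1) (pts _ At2) (pts _ Ax)).
- by do 2!(apply: List.Forall_cons; first by split; [rewrite ler0z; lia | exact: pts]).
- by rewrite ltr0z; lia.
- by rewrite ltr0z; lia.
- by rewrite ltr0z; lia.
- rewrite !big_cons big_nil /= addr0 -!toQZ -!toQD.
  by rewrite -[in X in _ = X]toQ0 -rel.
- by rewrite det3_toQ intr_eq0 gt_eqF.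
Qed.

Lemma minimal_fano_one_sided S rho (t1 t2 x y : lpt) :
  minimal_fano S -> vertex S rho ->
  in_hull_except S rho t1 -> in_hull_except S rho t2 ->
  in_hull_except S rho (third_vertex t1 t2) ->
  in_hull_except S rho x -> in_hull_except S rho y ->
  det3 t1 t2 x * det3 t1 t2 y < 0 -> False.
Proof.
move=> minS rhoS At1 At2 At3 Ax Ay.
have [Dx_gt0|Dx_lt0|<-] := ltrgtP 0 (det3 t1 t2 x); last by rewrite mul0r ltxx.
  by rewrite pmulr_rlt0 //; apply: (minimal_fano_one_sided_pos minS rhoS At1 At2 At3 Ax Ay).
by rewrite nmulr_rlt0 // => /(minimal_fano_one_sided_pos minS rhoS At1 At2 At3 Ay Ax); apply.
Qed.

(** * Vertices *)

Lemma conv_split (B : lpt -> Prop) (q : lpt) x :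
  conv (fun w => B w \/ w = q) x ->
  x = toQ q \/ exists2 lam : rat, 0 <= lam < 1 &
    exists2 y, conv B y & x = lam *: toQ q + (1 - lam) *: y.
Proof.
move=> /conv_hull[l [lBq [l1 ->]]]; move/ForallP: lBq => lBq.
have w_ge0 p : p \in l -> 0 <= p.1 by case/lBq.
pose isq (p : rat * qpt) := p.2 == toQ q.
set lam := \sum_(p <- l | isq p) p.1; set r := \sum_(p <- l | ~~ isq p) p.1.
set y := \sum_(p <- l | ~~ isq p) p.1 *: p.2.
have lam_r : lam + r = 1 by rewrite -l1 (bigID isq).
have xE : \sum_(p <- l) p.1 *: p.2 = lam *: toQ q + y.
  rewrite (bigID isq) /= scaler_suml; congr (_ + _).
  by apply: eq_bigr => p /eqP ->.
have lam_ge0 : 0 <= lam by rewrite /lam big_seq_cond sumr_ge0 // => p /andP[/w_ge0].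
have r_ge0 : 0 <= r by rewrite /r big_seq_cond sumr_ge0 // => p /andP[/w_ge0].
have [r0|r_neq0] := eqVneq r 0.
  left; suff y0 : y = 0 by rewrite xE y0 addr0 (_ : lam = 1) ?scale1r //; lra.
  rewrite /y big_seq_cond big1 // => p /andP[lp nq].
  suff -> : p.1 = 0 by rewrite scale0r.
  move/eqP: r0; rewrite /r big_seq_cond psumr_eq0 => [/allP/(_ p lp)|].
    by rewrite lp nq => /eqP.
  by move=> i /andP[/w_ge0].
right; exists lam; first by rewrite lam_ge0 /= -lam_r ltrDl lt_def r_neq0.
exists (r^-1 *: y); last by rewrite xE scalerA -lam_r addrAC subrr add0r mulfV ?scale1r.
apply/conv_hull; exists [seq (p.1 / r, p.2) | p <- l & ~~ isq p]; split; last split.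
- apply/List.Forall_map/ForallP => p; rewrite mem_filter => /andP[nq lp] /=.
  have [w_ge0' [v [Bv|vq] pv]] := lBq p lp; last by rewrite /isq pv vq eqxx in nq.
  by split; [rewrite divr_ge0 | exists v].
- by rewrite big_map big_filter -mulr_suml mulfV.
- rewrite big_map big_filter scaler_sumr; apply: eq_bigr => p _.
  by rewrite scalerA mulrC.
Qed.

Lemma vertex_of_filter_redundant S s v :
  s \in S -> conv (fun w => w \in S /\ w != s) (toQ s) ->
  vertex (filter (predC1 s) S) v -> vertex S v.
Proof.
move=> sS s_red [v_S' v_ext]; move: (v_S'); rewrite mem_filter => /andP[v_neq_s vS].
split=> // v_red; apply: v_ext.
pose B w := w \in filter (predC1 s) S /\ w != v.
have split_at (a b : lpt) : (forall w, w \in S -> w != a -> w != b -> B w) -> a != b ->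
    conv (fun w => w \in S /\ w != a) (toQ a) ->
    exists2 lam : rat, 0 <= lam < 1 & exists2 y, conv B y & toQ a = lam *: toQ b + (1 - lam) *: y.
  move=> Bab ab a_red; have : conv (fun w => B w \/ w = b) (toQ a).
    apply: conv_mono a_red => w [wS wa]; have [->|wb] := eqVneq w b; first by right.
    by left; apply: Bab.
  by case/conv_split => [/toQ_inj/eqP|//]; rewrite (negbTE ab).
have Bw w : w \in S -> w != s -> w != v -> B w by move=> wS ws wv; rewrite /B mem_filter /= ws.
have Bw' w : w \in S -> w != v -> w != s -> B w by move=> wS wv ws; apply: Bw.
have [L /andP[L_ge0 L_lt1] [y By vE]] := split_at v s Bw' v_neq_s v_red.
have s_neq_v : s != v by rewrite eq_sym.
have [K /andP[K_ge0 K_lt1] [y' By' sE]] := split_at s v Bw s_neq_v s_red.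
set den := 1 - L * K; have den_gt0 : 0 < den by rewrite /den; nra.
have denv : den *: toQ v = (L * (1 - K)) *: y' + (1 - L) *: y.
  rewrite /den scalerBl scale1r {1}vE sE; apply: row3P; rewrite !mxE; ring.
have -> : toQ v = (L * (1 - K) / den) *: y' + (1 - L * (1 - K) / den) *: y.
  apply: (scalerI (lt0r_neq0 den_gt0)); rewrite denv.
  by apply: row3P; rewrite !mxE /den; field; rewrite -/den lt0r_neq0.
apply: (conv2 By' By); rewrite divr_ge0 ?ler_pdivrMr ?mul1r /den /=; nra.
Qed.

Lemma conv_vertices S s : s \in S -> conv (vertex S) (toQ s).
Proof.
elim: {S}(size S) {-2}S (leqnn (size S)) s => [|n IH] S size_S s sS.
  by move: size_S; rewrite leqn0 => /nilP S0; rewrite S0 in sS.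
have [s_vertex|s_red] := classic (vertex S s); first exact: conv_pt.
have {}s_red : conv (fun w => w \in S /\ w != s) (toQ s).
  by apply: NNPP => s_ext; apply: s_red.
set S' := filter (predC1 s) S.
have size_S' : (size S' <= n)%N.
  rewrite -ltnS (leq_trans _ size_S) // size_filter -[X in (_ < X)%N](count_predC (pred1 s)).
  by rewrite -addn1 addnC leq_add2r -has_count has_pred1.
apply: (conv_mono (fun v => vertex_of_filter_redundant sS s_red)).
apply: conv_trans s_red => w [wS ws]; apply: (IH S' size_S').
by rewrite mem_filter /= ws.
Qed.

Lemma equiv_to_of_vertices S (L M : seq lpt) (A : 'M[int]_3) :
  (forall rho, vertex S rho -> rho \in L) -> {subset L <= S} ->
  map (fun v : lpt => v *m A) M =i L -> equiv_to S A M.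
Proof.
move=> SL LS ML x; split; last by apply: conv_mono => p; rewrite /polytope ML => /LS.
apply: conv_trans => s /conv_vertices; apply: conv_mono => v /SL.
by rewrite /polytope ML.
Qed.

(** * Lattice planes *)

Section LatticeBasis2.
Variables e1 e2 : lpt.
Hypothesis basis_e : lattice_basis2 e1 e2.

Lemma lattice_basis2_indep (p q : int) : p *: e1 + q *: e2 = 0 -> p = 0 /\ q = 0.
Proof.
move=> /(congr1 toQ); rewrite toQD !toQZ toQ0 => /basis_e.1[/eqP p0 /eqP q0].
by move: p0 q0; rewrite !intr_eq0 => /eqP -> /eqP ->.
Qed.

Lemma lattice_basis2_plane_decomp (x s : lpt) (g m : int) :
  det3 e1 e2 x = g -> g != 0 -> det3 e1 e2 s = g * m ->
  exists M M' : int, s = M *: e1 + M' *: e2 + m *: x.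
Proof.
move=> det_x g_neq0 det_s; set y := s - m *: x.
have gy : g *: y = det3 s e2 x *: e1 + det3 e1 s x *: e2.
  have := cramer3 e1 e2 x s; rewrite det_x det_s /y => cr.
  rewrite scalerBr cr; apply: row3P; rewrite !mxE; ring.
have gQ : (g%:~R : rat) != 0 by rewrite intr_eq0.
have [M [M' yE]] : exists M M' : int, y = M *: e1 + M' *: e2.
  apply: basis_e.2; exists ((det3 s e2 x)%:~R / g%:~R), ((det3 e1 s x)%:~R / g%:~R).
  apply: (scalerI gQ); rewrite -toQZ gy toQD !toQZ.
  by apply: row3P; rewrite !mxE; field.
by exists M, M'; rewrite -yE /y subrK.
Qed.

Lemma lattice_basis2_minors_neq0 :
  ~ [/\ det3 e1 e2 (mkpt 1 0 0) = 0, det3 e1 e2 (mkpt 0 1 0) = 0 & det3 e1 e2 (mkpt 0 0 1) = 0].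
Proof.
set n0 := det3 e1 e2 _; set n1 := det3 e1 e2 _; set n2 := det3 e1 e2 _.
move=> [z0 z1 z2]; set a := e1 ord0; set b := e2 ord0.
(* a x (a x b) = (a.b) a - |a|^2 b, and the minors are the coordinates of a x b. *)
have : (a i0 * a i0 + a i1 * a i1 + a i2 * a i2) *: e2
       + (- (a i0 * b i0 + a i1 * b i1 + a i2 * b i2)) *: e1 = 0.
  transitivity (mkpt (a i2 * n1 - a i1 * n2) (a i0 * n2 - a i2 * n0) (a i1 * n0 - a i0 * n1)).
    by apply: row3P; rewrite !mkptE !mxE /n0 /n1 /n2 /det3 !mkptE; ring.
  by rewrite z0 z1 z2; apply: row3P; rewrite !mkptE !mxE; ring.
rewrite addrC => /lattice_basis2_indep[_ sq0].
have e1_0 : e1 = 0 by apply: row3P; rewrite !mxE -/a; nia.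
have [] := @lattice_basis2_indep 1 0; last by [].
by rewrite e1_0 scaler0 scale0r addr0.
Qed.

Lemma lattice_basis2_complete : exists x, det3 e1 e2 x = 1.
Proof.
have := lattice_basis2_minors_neq0.
set n0 := det3 e1 e2 _; set n1 := det3 e1 e2 _; set n2 := det3 e1 e2 _ => minors_neq0.
(* The gcd g of the minors is det3 e1 e2 x for some x; decomposing the standard basis
   along e1, e2, x shows that g divides det(I) = 1. *)
have [u1 [v1 bez1]] := Bezoutz n0 n1; have [u2 [v2 bez2]] := Bezoutz (gcdz n0 n1) n2.
set g := gcdz (gcdz n0 n1) n2 in bez2.
set x := mkpt (u2 * u1) (u2 * v1) v2.
have det_x : det3 e1 e2 x = g.
  by rewrite -bez2 -bez1 /n0 /n1 /n2 /x /det3 !mkptE; ring.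
have g_neq0 : g != 0.
  by rewrite /g !gcdz_eq0; apply/negP => /andP[/andP[/eqP ? /eqP ?] /eqP ?]; apply: minors_neq0.
have g_gt0 : 0 < g by rewrite lt_def g_neq0 /g /gcdz.
have [m0 n0E] := dvdzP (dvdz_trans (dvdz_gcdl _ n2) (dvdz_gcdl n0 n1)).
have [m1 n1E] := dvdzP (dvdz_trans (dvdz_gcdl _ n2) (dvdz_gcdr n0 n1)).
have [m2 n2E] := dvdzP (dvdz_gcdr (gcdz n0 n1) n2).
have decomp c m : det3 e1 e2 c = m * g -> exists M M' : int, c = M *: e1 + M' *: e2 + m *: x.
  by move=> det_c; apply: (lattice_basis2_plane_decomp det_x g_neq0); rewrite det_c mulrC.
have [M0 [M0' E0]] := decomp _ _ n0E; have [M1 [M1' E1]] := decomp _ _ n1E.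
have [M2 [M2' E2]] := decomp _ _ n2E.
have : det3 (mkpt 1 0 0) (mkpt 0 1 0) (mkpt 0 0 1) = 1 by rewrite /det3 !mkptE; ring.
rewrite E0 E1 E2 (_ : det3 _ _ _ = (M0 * (M1' * m2 - m1 * M2') - M0' * (M1 * m2 - m1 * M2)
    + m0 * (M1 * M2' - M1' * M2)) * det3 e1 e2 x); last by rewrite /det3 !mxE; ring.
rewrite det_x; move: (_ + _) => D unit_g; exists x; rewrite det_x.
have [D_le0|D_ge1] : D <= 0 \/ 1 <= D by lia.
  by have := mulr_le0_ge0 D_le0 (ltW g_gt0); lia.
have : 0 <= (D - 1) * g by rewrite mulr_ge0 ?subr_ge0 // ltW.
by rewrite mulrBl mul1r; lia.
Qed.

End LatticeBasis2.

Definition tri (t1 t2 : lpt) : seq lpt := [:: t1; t2; third_vertex t1 t2].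

Lemma lattice_basis2_tri_uniq e1 e2 : lattice_basis2 e1 e2 -> uniq (tri e1 e2).
Proof.
move=> basis_e; have indep := lattice_basis2_indep basis_e.
rewrite /= !inE !negb_or andbT -andbA; apply/and3P; split; apply/eqP => eq_e.
- have /indep[] : 1 *: e1 + (-1) *: e2 = 0 by rewrite eq_e scaleN1r scale1r subrr.
  by move/eqP.
- have /indep[] : 3 *: e1 + 1 *: e2 = 0.
    rewrite -(subrr e1) [X in _ = _ - X]eq_e.
    by apply: row3P; rewrite !mxE; ring.
  by move/eqP.
- have /indep[] : 2 *: e1 + 2 *: e2 = 0.
    rewrite -(subrr e2) [X in _ = _ - X]eq_e.
    by apply: row3P; rewrite !mxE; ring.
  by move/eqP.
Qed.

Lemma in_span2_of_det3 (f1 f2 x z : lpt) :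
  det3 f1 f2 x = 1 -> det3 f1 f2 z = 0 -> in_span2 f1 f2 (toQ z).
Proof.
move=> det_x det_z; exists (det3 z f2 x)%:~R, (det3 f1 z x)%:~R.
have := cramer3 f1 f2 x z; rewrite det_x det_z scale1r scale0r addr0 => zE.
by rewrite {1}zE toQD !toQZ.
Qed.

Lemma in_span2_l (f1 f2 : lpt) : in_span2 f1 f2 (toQ f1).
Proof. by exists 1, 0; rewrite scale1r scale0r addr0. Qed.

Lemma in_span2_r (f1 f2 : lpt) : in_span2 f1 f2 (toQ f2).
Proof. by exists 0, 1; rewrite scale1r scale0r add0r. Qed.

Lemma det3_in_span2 (f1 f2 : lpt) (u v w : qpt) :
  in_span2 f1 f2 u -> in_span2 f1 f2 v -> in_span2 f1 f2 w -> det3 u v w = 0.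
Proof. by move=> [a [b ->]] [c [d ->]] [p [q ->]]; rewrite /det3 !mxE; ring. Qed.

Lemma in_span2_sub (e1 e2 f1 f2 : lpt) :
  in_span2 f1 f2 (toQ e1) -> in_span2 f1 f2 (toQ e2) ->
  forall x, in_span2 e1 e2 x -> in_span2 f1 f2 x.
Proof.
move=> [a [b e1E]] [c [d e2E]] x [p [q ->]]; exists (p * a + q * c), (p * b + q * d).
by rewrite e1E e2E; apply: row3P; rewrite !mxE; ring.
Qed.

Lemma det3_neq0_of_planes_neq (e1 e2 f1 f2 : lpt) :
  lattice_basis2 e1 e2 -> lattice_basis2 f1 f2 ->
  ~ (forall x, in_span2 e1 e2 x <-> in_span2 f1 f2 x) ->
  ~ (det3 f1 f2 e1 = 0 /\ det3 f1 f2 e2 = 0).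
Proof.
move=> basis_e basis_f planes_neq [e1_0 e2_0]; apply: planes_neq => x.
have [xe det_xe] := lattice_basis2_complete basis_e.
have [xf det_xf] := lattice_basis2_complete basis_f.
have e1f := in_span2_of_det3 det_xf e1_0; have e2f := in_span2_of_det3 det_xf e2_0.
have det0 z : in_span2 f1 f2 (toQ z) -> det3 e1 e2 z = 0.
  move=> zf; apply/eqP; rewrite -(intr_eq0 rat) -det3_toQ.
  by rewrite (det3_in_span2 e1f e2f zf).
have f1e := in_span2_of_det3 det_xe (det0 _ (in_span2_l f1 f2)).
have f2e := in_span2_of_det3 det_xe (det0 _ (in_span2_r f1 f2)).
by split; apply: in_span2_sub.
Qed.

(** * Two P(1,1,2)-triangles *)

Lemma opposite_signs (a b c : int) : 2 * a + b + c = 0 -> ~ (a = 0 /\ b = 0) ->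
  [\/ b * c < 0, a * c < 0 | a * b < 0].
Proof.
move=> rel nz; have [bc_lt0|bc_ge0] := ltP (b * c) 0; first exact: Or31.
have [b0|b_neq0] := eqVneq b 0.
  have a_neq0 : a != 0 by apply/eqP => a0; apply: nz.
  by apply: Or32; nia.
by apply: Or33; nia.
Qed.

Lemma triangles_share_vertex S e1 e2 f1 f2 :
  minimal_fano S -> P112_triangle S e1 e2 -> P112_triangle S f1 f2 ->
  ~ (det3 f1 f2 e1 = 0 /\ det3 f1 f2 e2 = 0) -> has (mem (tri f1 f2)) (tri e1 e2).
Proof.
move=> minS [basis_e [ve1 [ve2 ve3]]] [_ [vf1 [vf2 vf3]]] nz.
apply: contraT => /hasPn no_common; exfalso.
have one_sided rho x y : rho \in tri e1 e2 -> vertex S rho -> vertex S x -> vertex S y ->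
    x != rho -> y != rho -> det3 f1 f2 x * det3 f1 f2 y < 0 -> False.
  move=> rho_e vrho vx vy x_rho y_rho.
  have : rho \notin tri f1 f2 := no_common rho rho_e.
  rewrite /tri !inE !negb_or ![rho == _]eq_sym => /and3P[f1_rho f2_rho f3_rho] sign.
  by apply: (minimal_fano_one_sided minS vrho _ _ _ _ _ sign);
    split=> //; exact: vertex_in_hull.
have [in1 in2 in3] : [/\ e1 \in tri e1 e2, e2 \in tri e1 e2 & third_vertex e1 e2 \in tri e1 e2].
  by rewrite /tri !inE !eqxx ?orbT.
have := lattice_basis2_tri_uniq basis_e.
rewrite /tri /= !inE !negb_or andbT -andbA => /and3P[e12 e13 e23].
have rel : 2 * det3 f1 f2 e1 + det3 f1 f2 e2 + det3 f1 f2 (third_vertex e1 e2) = 0.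
  by rewrite det3_third; ring.
case: (opposite_signs rel nz) => sign.
- by apply: (one_sided e1 _ _ in1 ve1 ve2 ve3 _ _ sign); rewrite eq_sym.
- by apply: (one_sided e2 _ _ in2 ve2 ve1 ve3 e12 _ sign); rewrite eq_sym.
- exact: (one_sided _ _ _ in3 ve3 ve1 ve2 e13 e23 sign).
Qed.

Section OffPlane.
Variables (S : seq lpt) (t1 t2 x : lpt).
Hypotheses (minS : minimal_fano S) (t1S : in_hull S t1) (t2S : in_hull S t2)
  (t3S : in_hull S (third_vertex t1 t2)) (xS : in_hull S x) (x_off : det3 t1 t2 x != 0).

Lemma double_depth_not_vertex rho z : in_hull S z ->
  det3 t1 t2 rho = -2 * det3 t1 t2 x -> det3 t1 t2 z = - det3 t1 t2 x -> ~ vertex S rho.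
Proof.
move=> zS det_rho det_z rhoS.
have ne v : in_hull S v -> det3 t1 t2 v != det3 t1 t2 rho -> in_hull_except S rho v.
  by move=> vS det_neq; split=> //; apply: contraNneq det_neq => ->.
move: x_off; set h := det3 t1 t2 x => h_neq0.
apply: (minimal_fano_one_sided minS rhoS (ne _ t1S _) (ne _ t2S _) (ne _ t3S _) (ne _ xS _)
  (ne _ zS _)); rewrite ?det3_third ?det3_aba ?det3_abb ?det_rho ?det_z -/h; nia.
Qed.

Lemma third_vertex_apex_not_vertex : ~ vertex S (third_vertex x t1).
Proof.
move=> rhoS; apply: (double_depth_not_vertex (z := - x - t1) _ _ _ rhoS).
- rewrite /in_hull (_ : toQ _ = (1 / 2) *: toQ (third_vertex x t1) + (1 / 4) *: toQ t2
                               + (1 / 4) *: toQ (third_vertex t1 t2)).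
    by apply: (conv3 (vertex_in_hull rhoS) t2S t3S); lra.
  by apply: row3P; rewrite !mxE; field.
- by rewrite det3_third det3_aba; ring.
- by rewrite /det3 !mxE; ring.
Qed.

Lemma third_vertex_base_not_vertex : ~ vertex S (third_vertex x t2).
Proof.
move=> rhoS; apply: (double_depth_not_vertex (z := - x - t1 - t2) _ _ _ rhoS).
- rewrite /in_hull (_ : toQ _ = (1 / 2) *: toQ (third_vertex x t2)
                               + (1 - 1 / 2) *: toQ (third_vertex t1 t2)).
    by apply: (conv2 (vertex_in_hull rhoS) t3S); lra.
  by apply: row3P; rewrite !mxE; field.
- by rewrite det3_third det3_abb; ring.
- by rewrite /det3 !mxE; ring.
Qed.

End OffPlane.

Lemma det3_pair_neq0 (t1 t2 a b : lpt) : ~ (det3 t1 t2 a = 0 /\ det3 t1 t2 b = 0) ->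
  (det3 t1 t2 b = 0 -> det3 t1 t2 a != 0) /\
  (det3 t1 t2 (third_vertex a b) = 0 -> det3 t1 t2 a != 0).
Proof.
rewrite det3_third => nz; split=> h; apply/eqP => a0; apply: nz; split=> //.
by move: h; rewrite a0; lia.
Qed.

Lemma shared_vertex_is_apex S e1 e2 f1 f2 :
  minimal_fano S -> P112_triangle S e1 e2 -> P112_triangle S f1 f2 ->
  ~ (det3 e1 e2 f1 = 0 /\ det3 e1 e2 f2 = 0) -> ~ (det3 f1 f2 e1 = 0 /\ det3 f1 f2 e2 = 0) ->
  has (mem (tri f1 f2)) (tri e1 e2) -> e1 = f1.
Proof.
move=> minS [_ [ve1 [ve2 ve3]]] [_ [vf1 [vf2 vf3]]] /det3_pair_neq0[f2E f3E]
  /det3_pair_neq0[e2F e3F].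
change (vertex S (third_vertex e1 e2)) in ve3; change (vertex S (third_vertex f1 f2)) in vf3.
have [he1 he2 he3] := And3 (vertex_in_hull ve1) (vertex_in_hull ve2) (vertex_in_hull ve3).
have [hf1 hf2 hf3] := And3 (vertex_in_hull vf1) (vertex_in_hull vf2) (vertex_in_hull vf3).
have hf2' : in_hull S (third_vertex f1 (third_vertex f1 f2)) by rewrite third_vertexK.
have e1_off := third_vertex_apex_not_vertex minS he1 he2 he3 hf1.
have f1_off := third_vertex_apex_not_vertex minS hf1 hf2 hf3 he1.
have f2_base := third_vertex_base_not_vertex minS hf1 hf2 hf3 he1.
have f3_base := third_vertex_base_not_vertex minS hf1 hf3 hf2' he1.
have f3_0 : det3 f1 f2 (third_vertex f1 f2) = 0 by rewrite det3_third det3_aba det3_abb; ring.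
have f3_a (a : lpt) : det3 f1 f2 a != 0 -> det3 f1 (third_vertex f1 f2) a != 0.
  by rewrite det3_a_third oppr_eq0.
case/hasP=> v; rewrite /tri !inE => /or3P[]/eqP-> /or3P[]/eqP // eq; exfalso.
- by apply: (e1_off (f2E _)); [rewrite -eq det3_aba | rewrite eq].
- by apply: (e1_off (f3E _)); [rewrite -eq det3_aba | rewrite eq third_vertexK].
- by apply: (f1_off (e2F _)); [rewrite eq det3_aba | rewrite -eq].
- by apply: (f2_base (e2F _)); [rewrite eq det3_abb | rewrite -eq].
- by apply: (f3_base (f3_a _ (e2F _))); [rewrite eq f3_0 | rewrite -eq].
- by apply: (f1_off (e3F _)); [rewrite eq det3_aba | rewrite -eq third_vertexK].
- by apply: (f2_base (e3F _)); [rewrite eq det3_abb | rewrite -eq third_vertexK].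
- by apply: (f3_base (f3_a _ (e3F _))); [rewrite eq f3_0 | rewrite -eq third_vertexK].
Qed.

Lemma common_apex_vertices S e1 e2 f :
  minimal_fano S -> vertex S e1 -> vertex S e2 -> vertex S (third_vertex e1 e2) ->
  vertex S f -> vertex S (third_vertex e1 f) -> det3 e1 e2 f != 0 ->
  forall rho, vertex S rho -> rho \in [:: e1; e2; f; third_vertex e1 e2; third_vertex e1 f].
Proof.
move=> minS ve1 ve2 ve3 vf vf3 det_f rho vrho; apply: contraT.
rewrite !inE !negb_or ![rho == _]eq_sym => /and5P[e1_rho e2_rho f_rho e3_rho f3_rho].
exfalso; apply: (minimal_fano_one_sided (t1 := e1) (t2 := e2) (x := f)
  (y := third_vertex e1 f) minS vrho); try by split=> //; apply: vertex_in_hull.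
by rewrite det3_third det3_aba; move: det_f; set K := det3 e1 e2 f; nia.
Qed.

Lemma lattice_basis2_primitive e1 f y (c : int) : lattice_basis2 e1 f -> f = c *: y ->
  c = 1 \/ c = -1.
Proof.
move=> basis fE; have c_neq0 : c != 0.
  apply/eqP => c0; have [] := @lattice_basis2_indep _ _ basis 0 1.
    by rewrite fE c0 !scale0r scale1r add0r.
  by move=> _ /eqP.
have [M [M' yE]] : exists M M' : int, y = M *: e1 + M' *: f.
  apply: basis.2; exists 0, (c%:~R)^-1; rewrite scale0r add0r fE toQZ scalerA.
  by rewrite mulVf ?scale1r // intr_eq0.
have /(lattice_basis2_indep basis)[_] : (c * M) *: e1 + (c * M' - 1) *: f = 0.
  by rewrite -[RHS](subrr f) {2}fE yE; apply: row3P; rewrite !mxE; ring.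
by move/eqP; rewrite subr_eq0 mulrC => /eqP/intUnitRing.unitzPl/pred2P.
Qed.

Lemma lattice_basis2_normal_form e1 e2 f : lattice_basis2 e1 e2 -> det3 e1 e2 f != 0 ->
  exists x (a b k : int), [/\ det3 e1 e2 x = 1 \/ det3 e1 e2 x = -1,
    0 <= a < k, 0 <= b < k & f = k *: x - a *: e1 - b *: e2].
Proof.
move=> basis_e; set K := det3 e1 e2 f => K_neq0.
have [x0 det_x0] := lattice_basis2_complete basis_e.
have [x1 [k [det_x1 k_gt0 fE]]] : exists x1 (k : int),
    [/\ det3 e1 e2 x1 = 1 \/ det3 e1 e2 x1 = -1, 0 < k &
        f = k *: x1 + det3 f e2 x0 *: e1 + det3 e1 f x0 *: e2].
  have := cramer3 e1 e2 x0 f; rewrite det_x0 scale1r -/K => fE.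
  have [K_gt0|K_lt0] : 0 < K \/ K < 0 by lia.
    by exists x0, K; split; [left | | rewrite {1}fE; apply: row3P; rewrite !mxE; ring].
  exists (- x0), (- K); split; [right | lia | rewrite {1}fE; apply: row3P; rewrite !mxE; ring].
  by rewrite /det3 !mxE -det_x0 /det3; ring.
have k_neq0 : k != 0 by rewrite gt_eqF.
set c1 := det3 f e2 x0 in fE; set c2 := det3 e1 f x0 in fE.
set q1 := ((- c1) %/ k)%Z; set a := ((- c1) %% k)%Z.
set q2 := ((- c2) %/ k)%Z; set b := ((- c2) %% k)%Z.
have c1_eq : c1 = - (q1 * k + a) by rewrite -divz_eq opprK.
have c2_eq : c2 = - (q2 * k + b) by rewrite -divz_eq opprK.
exists (x1 - q1 *: e1 - q2 *: e2), a, b, k; split.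
- by rewrite (_ : det3 _ _ _ = det3 e1 e2 x1); last by rewrite /det3 !mxE; ring.
- by rewrite /a modz_ge0 ?ltz_pmod.
- by rewrite /b modz_ge0 ?ltz_pmod.
by rewrite {1}fE c1_eq c2_eq; apply: row3P; rewrite !mxE; ring.
Qed.

Lemma residue_region (k a b : int) : 0 <= a < k -> 0 <= b < k ->
  (exists X Y : int, [/\ (k %| X - a)%Z, (k %| Y - b)%Z &
     [/\ X + Y <= k - 1, Y - X <= k - 1 & X - 3 * Y <= k - 1]])
  \/ a = b /\ 2 * a = k.
Proof.
move=> /andP[a_ge0 a_lt] /andP[b_ge0 b_lt].
have dvd_k c : (k %| c - k - c)%Z by rewrite addrAC subrr add0r rpredN dvdzz.
have [|ab_ge] := leP (a + b) (k - 1).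
  by left; exists a, b; rewrite !subrr !dvdz0; split=> //; split; lia.
have [|ba_ge] := ltP b a.
  by left; exists (a - k), b; rewrite subrr dvdz0 dvd_k; split=> //; split; lia.
have [|] := leP (a + k + 1) (3 * b).
  by left; exists (a - k), (b - k); rewrite !dvd_k; split=> //; split; lia.
by right; lia.
Qed.

Lemma common_apex_height_gt1 S e1 e2 f x (a b k X Y : int) :
  minimal_fano S -> vertex S e1 -> vertex S e2 -> vertex S (third_vertex e1 e2) ->
  vertex S f -> vertex S (third_vertex e1 f) ->
  det3 e1 e2 x = 1 \/ det3 e1 e2 x = -1 -> 1 < k -> f = k *: x - a *: e1 - b *: e2 ->
  (k %| X - a)%Z -> (k %| Y - b)%Z ->
  [/\ X + Y <= k - 1, Y - X <= k - 1 & X - 3 * Y <= k - 1] -> False.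
Proof.
move=> minS ve1 ve2 ve3 vf vf3 det_x k_gt1 fE /dvdzP[m XE] /dvdzP[n YE] [w3_ge0 w1_ge0 w2_ge0].
set z := x + m *: e1 + n *: e2.
have kQ : (k%:~R : rat) != 0 by rewrite intr_eq0 gt_eqF //; lia.
(* The three inequalities say that the weights below are nonnegative. *)
have zS : in_hull S z.
  rewrite /in_hull (_ : toQ z = (1 / k%:~R) *: toQ f
      + ((k - 1 + X - Y)%:~R / (2 * k%:~R)) *: toQ e1
      + ((k - 1 - X + 3 * Y)%:~R / (4 * k%:~R)) *: toQ e2
      + ((k - 1 - X - Y)%:~R / (4 * k%:~R)) *: toQ (third_vertex e1 e2)).
    have k_gt0 : (0 : rat) < k%:~R by rewrite ltr0z; lia.
    apply: (conv4 (vertex_in_hull vf) (vertex_in_hull ve1) (vertex_in_hull ve2)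
      (vertex_in_hull ve3)); rewrite ?divr_ge0 ?mulr_ge0 ?ler0z ?(ltW k_gt0) //; try lia.
    by field.
  have [-> ->] : X = a + m * k /\ Y = b + n * k by split; lia.
  by apply: row3P; rewrite /z fE !mxE; field.
have s2 : det3 e1 e2 x * det3 e1 e2 x = 1 by case: det_x => ->.
have det_z : det3 e1 e2 z = det3 e1 e2 x by rewrite /z /det3 !mxE; ring.
have det_f : det3 e1 e2 f = k * det3 e1 e2 x by rewrite fE /det3 !mxE; ring.
have ne v : in_hull S v -> det3 e1 e2 v != det3 e1 e2 f -> in_hull_except S f v.
  by move=> vS det_neq; split=> //; apply: contraNneq det_neq => ->.
have [h1 h2 h3] := And3 (vertex_in_hull ve1) (vertex_in_hull ve2) (vertex_in_hull ve3).
apply: (minimal_fano_one_sided minS vf (ne _ h1 _) (ne _ h2 _) (ne _ h3 _) (ne _ zS _)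
  (ne _ (vertex_in_hull vf3) _)).
all: rewrite ?det3_third ?det3_aba ?det3_abb ?det_z ?det_f; nia.
Qed.

Lemma common_apex_classification S e1 e2 f :
  minimal_fano S -> P112_triangle S e1 e2 -> P112_triangle S e1 f -> det3 e1 e2 f != 0 ->
  exists A, GL3Z A /\ (equiv_to S A M1 \/ equiv_to S A M2).
Proof.
move=> minS [basis_e [ve1 [ve2 ve3]]] [basis_f [_ [vf vf3]]] det_f.
change (vertex S (third_vertex e1 e2)) in ve3; change (vertex S (third_vertex e1 f)) in vf3.
set L := [:: e1; e2; f; third_vertex e1 e2; third_vertex e1 f].
have vertL := common_apex_vertices minS ve1 ve2 ve3 vf vf3 det_f.
have LS : {subset L <= S}.
  apply/allP; rewrite /= andbT; apply/and5P.
  by split; [case: ve1 | case: ve2 | case: vf | case: ve3 | case: vf3].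
have [x [a [b [k [det_x a_bd b_bd fE]]]]] := lattice_basis2_normal_form basis_e det_f.
have [[a_ge0 a_lt] [b_ge0 b_lt]] := (andP a_bd, andP b_bd).
have GL3Z_mat3 r : det3 e1 e2 r = det3 e1 e2 x -> GL3Z (mat3 e1 e2 r).
  by rewrite /GL3Z det_mat3 => ->.
have [k1|k_gt1] : k = 1 \/ 1 < k by lia.
  have [a0 b0] : a = 0 /\ b = 0 by lia.
  have fx : f = x by rewrite fE k1 a0 b0 scale1r !scale0r !subr0.
  exists (mat3 e1 e2 f); split; first by apply: GL3Z_mat3; rewrite fx.
  left; apply: equiv_to_of_vertices vertL LS _ => v; congr (v \in _).
  by rewrite /M1 /= !mkpt_mul_mat3; congr [:: _; _; _; _; _]; apply: row3P; rewrite !mxE; ring.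
case: (residue_region a_bd b_bd) => [[X [Y [dX dY ineqs]]]|[ab a2]].
  by case: (common_apex_height_gt1 minS ve1 ve2 ve3 vf vf3 det_x k_gt1 fE dX dY ineqs).
have [a1|a_gt1] : a = 1 \/ 1 < a by lia.
  exists (mat3 e1 e2 (x - e1 - e2)); split.
    by apply: GL3Z_mat3; rewrite /det3 !mxE; ring.
  have L_perm : perm_eq [:: e1; e2; third_vertex e1 e2; f; third_vertex e1 f] L.
    by rewrite /L !perm_cons (perm_catCA [:: third_vertex e1 e2] [:: f] [:: _]).
  right; apply: equiv_to_of_vertices vertL LS _ => v; rewrite -(perm_mem L_perm).
  congr (v \in _); rewrite /M2 /= !mkpt_mul_mat3 fE -ab -a2 a1.
  by congr [:: _; _; _; _; _]; apply: row3P; rewrite !mxE; ring.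
have fE' : f = a *: (2%:Z *: x - e1 - e2).
  by rewrite fE -a2 -ab; apply: row3P; rewrite !mxE; ring.
by case: (lattice_basis2_primitive basis_f fE'); lia.
Qed.

Theorem lemma4p13 (S : seq lpt) (e1 e2 f1 f2 : lpt) :
  minimal_fano S ->
  P112_triangle S e1 e2 ->
  P112_triangle S f1 f2 ->
  ~ (forall x : qpt, in_span2 e1 e2 x <-> in_span2 f1 f2 x) ->
  exists A : 'M[int]_3, GL3Z A /\ (equiv_to S A M1 \/ equiv_to S A M2).
Proof.
move=> minS tri_e tri_f planes_neq.
have off_f := det3_neq0_of_planes_neq tri_e.1 tri_f.1 planes_neq.
have off_e : ~ (det3 e1 e2 f1 = 0 /\ det3 e1 e2 f2 = 0).
  apply: (det3_neq0_of_planes_neq tri_f.1 tri_e.1) => planes_eq.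
  by apply: planes_neq => x; apply: iff_sym.
have shared := triangles_share_vertex minS tri_e tri_f off_f.
have e1f1 := shared_vertex_is_apex minS tri_e tri_f off_e off_f shared.
rewrite -{}e1f1 in tri_f off_e *; apply: common_apex_classification minS tri_e tri_f _.
by apply/eqP => f2_0; apply: off_e; rewrite det3_aba f2_0.
Qed.
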